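(* Let $L$ be a commutative language with the linear property over $\Sigma=\{a_1,\dots,a_k\}$, with constant $\vec{c}$ and periods $\mathcal{P}=\{\vec{p}^{(1)},\dots,\vec{p}^{(q)}\}$, $q>0$, where every component of every period is even. Then for all even integers $m\ge 4$ and every $R=\{r\}$ with $1\le r\le m/2-1$, the decomposed base $D=X\cup(Y\lhd W)$ built from these data as described below satisfies $L=\mathcal{C}(D)$.
   Context: Notation: $\Sigma$ is the terminal alphabet, $\mathring\Sigma$ its dotted copy, $\widetilde\Sigma=\Sigma\cup\mathring\Sigma$, $\widetilde a=\{a,\mathring a\}$. $\Psi$ is the Parikh image, $\pi_\Delta$ is projection onto $\Delta$, and $\sqcup\!\sqcup$ denotes the shuffle operation. The match $@$ on letters is $a@\mathring a=\mathring a@a=a$, $\mathring a@\mathring a=\mathring a$, undefined otherwise; it extends letter-by-letter to equal-length words and to languages. $B^{@}$ is the closure of $B$ under match, and $\mathcal{C}(B)=B^{@}\cap\Sigma^*$. $\mathit{switch}$ exchanges $a$ and $\mathring a$. A language with the linear property has Parikh image $\{\vec c+n_1\vec p^{(1)}+\dots+n_q\vec p^{(q)}\mid n_i\ge0\}$; it is commutative if membership depends only on the Parikh image. For the module $m$ and set of slots $R$, let $R_m(a)=\{\mathring a\, a^{r-1}\mathring a\, a^{m-r-1}\mid r\in R\}$. The scaffold set is $sc(R)_m=\{x\mid\forall a\in\Sigma,\ \pi_{\widetilde a}(x)\in(R_m(a)\cup a)^*\}$, and the fill set is $fl(R)_m=\mathit{switch}(sc(R)_m)-\mathring\Sigma^*$.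 Appending: for $A\subseteq a^+$, factor $B=B_{\widetilde a}\cdot B_{\widetilde\Sigma-\widetilde a}$, where $B_{\widetilde a}\subseteq\widetilde\Sigma^*\widetilde a$ and $B_{\widetilde\Sigma-\widetilde a}\subseteq(\widetilde\Sigma-\widetilde a)^*$. Then $B\lhd A=B_{\widetilde a}\cdot(B_{\widetilde\Sigma-\widetilde a}\,\sqcup\!\sqcup\,A)$. For a commutative $F$, $B\lhd F$ applies $\lhd\pi_{a_i}(F)$ successively for all $i$. The sets are defined as follows: - $X=\bigcup_{\vec p\in\mathcal P}\{x\in fl(R)_m\mid\Psi(\pi_\Sigma(x))=\vec p\}$; - $Y=(R_m(a_1))^*\,\sqcup\!\sqcup\,\cdots\,\sqcup\!\sqcup\,(R_m(a_k))^*$; - $W$ is the finite commutative language with $\Psi(W)=\{\vec c+h_1\vec p^{(1)}+\dots+h_q\vec p^{(q)}\mid 0\le h_i<m/2\}$; - $D=X\cup(Y\lhd W)$, which is decomposed with scaffold $Y\lhd W$ and fill $X$. *)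

From mathcomp Require Import all_boot.
Set Implicit Arguments. Unset Strict Implicit. Unset Printing Implicit Defensive.

Section Defs.
Variable k : nat.

(* Terminal alphabet Sigma = 'I_k (a_1..a_k).  Extended alphabet
   Sigma~ = Sigma u dotted(Sigma): a letter (a, d) is dotted iff d = true. *)
Definition xletter := ('I_k * bool)%type.
Definition xword := seq xletter.
Definition undot (a : 'I_k) : xletter := (a, false).
Definition dot (a : 'I_k) : xletter := (a, true).

Definition parikh (w : seq 'I_k) : 'I_k -> nat := fun i => count_mem i w.

Definition comm_lang (L : seq 'I_k -> Prop) : Prop :=
  forall u v, parikh u =1 parikh v -> (L u <-> L v).

Definition lin_set (q : nat) (c : 'I_k -> nat) (p : 'I_q -> 'I_k -> nat)
  (v : 'I_k -> nat) : Prop :=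
  exists n : 'I_q -> nat, forall i, v i = c i + \sum_(j < q) n j * p j i.

Definition linear_property (L : seq 'I_k -> Prop) (q : nat) (c : 'I_k -> nat)
  (p : 'I_q -> 'I_k -> nat) : Prop :=
  forall v, (exists w, L w /\ parikh w =1 v) <-> lin_set c p v.

Definition lmatch (x y : xletter) : option xletter :=
  if x.1 == y.1 then
    if x.2 && y.2 then Some (x.1, true)
    else if x.2 || y.2 then Some (x.1, false)
    else None
  else None.

Fixpoint wmatch (u v : xword) : option xword :=
  match u, v with
  | [::], [::] => Some [::]
  | x :: u', y :: v' =>
      match lmatch x y, wmatch u' v' with
      | Some z, Some w => Some (z :: w)
      | _, _ => None
      end
  | _, _ => None
  end.

Inductive mclosure (B : xword -> Prop) : xword -> Prop :=
  | mc_base w : B w -> mclosure B w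
  | mc_match u v w : mclosure B u -> mclosure B v -> wmatch u v = Some w ->
      mclosure B w.

(* C(B) = B^@ cap Sigma^*, as a language over Sigma *)
Definition Cl (B : xword -> Prop) (w : seq 'I_k) : Prop :=
  mclosure B (map undot w).

Inductive star (T : Type) (S : seq T -> Prop) : seq T -> Prop :=
  | star_nil : star S [::]
  | star_app u v : S u -> star S v -> star S (u ++ v).

Inductive shuffle (T : Type) : seq T -> seq T -> seq T -> Prop :=
  | sh_nil : shuffle [::] [::] [::]
  | sh_l x u v w : shuffle u v w -> shuffle (x :: u) v (x :: w)
  | sh_r x u v w : shuffle u v w -> shuffle u (x :: v) (x :: w).

Definition shuffleL (T : Type) (A B : seq T -> Prop) (w : seq T) : Prop :=
  exists u v, A u /\ B v /\ shuffle u v w.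

Definition proj (a : 'I_k) (x : xword) : xword := [seq l <- x | l.1 == a].

Definition piSigma (x : xword) : seq 'I_k := [seq l.1 | l <- x & ~~ l.2].

Definition switch (x : xword) : xword := [seq (l.1, ~~ l.2) | l <- x].

(* R_m(a) for R = {r}: the single word a° a^(r-1) a° a^(m-r-1) *)
Definition Rword (m r : nat) (a : 'I_k) : xword :=
  dot a :: nseq (r - 1) (undot a) ++ dot a :: nseq (m - r - 1) (undot a).

Definition Rlang (m r : nat) (a : 'I_k) (u : xword) : Prop := u = Rword m r a.

Definition sc (m r : nat) (x : xword) : Prop :=
  forall a : 'I_k,
    star (fun u => Rlang m r a u \/ u = [:: undot a]) (proj a x).

Definition fl (m r : nat) (x : xword) : Prop :=
  (exists y, sc m r y /\ x = switch y) /\ ~~ all (fun l : xletter => l.2) x.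

Definition Xset (m r q : nat) (p : 'I_q -> 'I_k -> nat) (x : xword) : Prop :=
  fl m r x /\ exists j : 'I_q, parikh (piSigma x) =1 p j.

Definition Yset (m r : nat) : xword -> Prop :=
  foldr (fun (a : 'I_k) (acc : xword -> Prop) =>
           shuffleL (star (Rlang m r a)) acc)
        (fun w => w = [::]) (enum 'I_k).

Definition Wset (m q : nat) (c : 'I_k -> nat) (p : 'I_q -> 'I_k -> nat)
  (w : seq 'I_k) : Prop :=
  exists h : 'I_q -> nat, (forall j, h j < m %/ 2) /\
    forall i, parikh w i = c i + \sum_(j < q) h j * p j i.

(* Appending a^n to a single word x: x = u . v where u is the longest prefix
   ending with a letter of a~ (u = empty if there is none) and v contains no
   letter of a~; the result set is u . (v shuffle a^n). *)
Definition append1 (x : xword) (a : 'I_k) (n : nat) (z : xword) : Prop :=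
  let j := find (fun l : xletter => l.1 == a) (rev x) in
  let u := take (size x - j) x in
  let v := drop (size x - j) x in
  exists t, shuffle v (nseq n (undot a)) t /\ z = u ++ t.

Fixpoint append_seq (f : 'I_k -> nat) (s : seq 'I_k) (x z : xword) : Prop :=
  match s with
  | [::] => z = x
  | i :: s' => exists x', append1 x i (f i) x' /\ append_seq f s' x' z
  end.

Definition appendL (B : xword -> Prop) (F : seq 'I_k -> Prop) (z : xword) : Prop :=
  exists y w, B y /\ F w /\ append_seq (parikh w) (enum 'I_k) y z.

Definition Dset (m r q : nat) (c : 'I_k -> nat) (p : 'I_q -> 'I_k -> nat)
  (x : xword) : Prop :=
  Xset m r p x \/ appendL (Yset m r) (Wset m c p) x.

End Defs.

From mathcomp Require Import all_boot zify.
Set Implicit Arguments. Unset Strict Implicit. Unset Printing Implicit Defensive.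

(* Soundness: matching preserves an invariant.  A word is fill-like if it ends with a dotted
   letter and its undotted letters count a sum of periods; it is scaffold-like if, for each
   letter a, it has t_a + m nb_a occurrences of a with t in the linear set, and all dotted a's lie
   in holes of the first nb_a blocks of length m.  Two scaffold-like words never match, as both
   leave a common non-hole position undotted; matching a scaffold-like word with a fill-like one
   undots two positions per block for a sum of periods.  An undotted word with the invariant
   thus has Parikh image t + (m/2) v with v a sum of periods, which is in the linear set.
   Completeness: write Psi(w) = c + sum n_j p_j with n_j = l_j (m/2) + h_j.  The word w with
   sum_j l_j p_j(a)/2 scaffold blocks per letter a, followed by the remainder
   c + sum h_j p_j (the Parikh image of a word of W), lies in Y <| W; matching it l_j times with
   fill words of Parikh image p_j removes p_j(a)/2 blocks of each letter a and ends at w. *)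

Lemma map_nseq_in (T U : eqType) (f : T -> U) y s :
  {in s, forall x, f x = y} -> map f s = nseq (size s) y.
Proof.
move=> fy; rewrite -(size_map f); apply/all_pred1P/allP => _ /mapP[x xs ->].
by rewrite /= fy.
Qed.

Lemma filter_iota_ltn M N : M <= N -> [seq o <- iota 0 N | o < M] = iota 0 M.
Proof.
move=> MN; rewrite -(subnKC MN) iotaD filter_cat add0n.
rewrite (eq_in_filter (a2 := predT)) ?filter_predT => [|o]; last by rewrite mem_iota.
rewrite (eq_in_filter (a2 := pred0)) ?filter_pred0 ?cats0 // => o.
by rewrite mem_iota => /andP[Mo _]; rewrite ltnNge Mo.
Qed.

Section ShuffleStar.
Variable T : Type.
Implicit Types u v w s : seq T.

Lemma shuffle_filter (P : pred T) s : shuffle (filter P s) (filter (predC P) s) s.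
Proof. by elim: s => [|x s IH] /=; [constructor | case: (P x); constructor]. Qed.

Lemma filter_shuffle (P : pred T) u v w :
  shuffle u v w -> shuffle (filter P u) (filter P v) (filter P w).
Proof.
elim=> [|x {}u {}v {}w _ IH|x {}u {}v {}w _ IH] /=; first by constructor.
all: by case: (P x) => //; constructor.
Qed.

Lemma map_shuffle (U : Type) (f : T -> U) u v w :
  shuffle u v w -> shuffle (map f u) (map f v) (map f w).
Proof. by elim=> *; constructor. Qed.

Lemma all_shuffle (P : pred T) u v w : shuffle u v w -> all P w = all P u && all P v.
Proof. by elim=> //= x {}u {}v {}w _ ->; [rewrite andbA | rewrite andbCA]. Qed.

Lemma shuffle_catl s u v w : shuffle u v w -> shuffle (s ++ u) v (s ++ w).
Proof. by move=> sh; elim: s => //= x s IH; constructor. Qed.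

Lemma shuffle0s v w : shuffle [::] v w -> w = v.
Proof. by move E: [::] => u sh; elim: sh E => // x {}u {}v {}w _ IH /IH ->. Qed.

Lemma shuffles0 u w : shuffle u [::] w -> w = u.
Proof. by move E: [::] => v sh; elim: sh E => // x {}u {}v {}w _ IH /IH ->. Qed.

Lemma star_cat (S : seq T -> Prop) u v : star S u -> star S v -> star S (u ++ v).
Proof. by elim=> // u1 u2 S1 _ IH /IH; rewrite -catA; apply: star_app. Qed.

Lemma star_flatten_nseq (S : seq T -> Prop) u n : S u -> star S (flatten (nseq n u)).
Proof. by move=> Su; elim: n => [|n IH] /=; constructor. Qed.

Lemma star_nseq (S : seq T -> Prop) x n : S [:: x] -> star S (nseq n x).
Proof. by move=> Sx; elim: n => [|n IH]; [constructor | apply: (star_app Sx IH)]. Qed.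

Lemma star_eq1 u v : star (eq^~ u) v -> exists n, v = flatten (nseq n u).
Proof. by elim=> [|_ v2 -> _ [n ->]]; [exists 0 | exists n.+1]. Qed.

Lemma star_last (S : seq T -> Prop) (P : pred T) d v :
  (forall u, S u -> u <> [::] /\ P (last d u)) -> star S v -> v <> [::] -> P (last d v).
Proof.
move=> HS; elim=> // u1 [|y u2] S1 _ IH _; first by rewrite cats0; case: (HS _ S1).
by rewrite last_cat; case: u1 S1 => [|x u1] /HS [] // _ _; apply: IH.
Qed.

Lemma count_flatten_nseq (P : pred T) n s : count P (flatten (nseq n s)) = n * count P s.
Proof. by elim: n => //= n IH; rewrite count_cat IH mulSn. Qed.

Lemma size_flatten_nseq n s : size (flatten (nseq n s)) = n * size s.
Proof. by rewrite -!count_predT count_flatten_nseq. Qed.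

End ShuffleStar.

Section BoolPairs.
Implicit Type s : seq (bool * bool).

Lemma nth_andb s o :
  nth false [seq e.1 && e.2 | e <- s] o = nth false (unzip1 s) o && nth false (unzip2 s) o.
Proof. by elim: s o => [|e s IH] [|o] //=. Qed.

Lemma nth_orb s o : all (fun e => e.1 || e.2) s -> o < size s ->
  nth false (unzip1 s) o || nth false (unzip2 s) o.
Proof. by elim: s o => [|e s IH] [|o] //= /andP[eo al] os; [apply: eo | apply: IH]. Qed.

Lemma count_negb_andb s : all (fun e => e.1 || e.2) s ->
  count negb [seq e.1 && e.2 | e <- s] = count negb (unzip1 s) + count negb (unzip2 s).
Proof.
elim: s => //= -[d1 d2] s IH /andP[/= d12 /IH ->].
by case: d1 d2 d12 => -[] //=; rewrite addnS.
Qed.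

End BoolPairs.

Section Words.
Variable k : nat.
Implicit Types (x y z : xword k) (a b : 'I_k).

Definition dots a x : seq bool := [seq l.2 | l <- proj a x].

Lemma proj_dots a x : proj a x = [seq (a, d) | d <- dots a x].
Proof.
rewrite /dots -map_comp map_id_in // => l.
by rewrite mem_filter => /andP[/eqP <- _]; case: l.
Qed.

Lemma proj_nseq a b n : proj a (nseq n (undot b)) = nseq ((b == a) * n) (undot a).
Proof.
by rewrite /proj filter_nseq /=; case: eqVneq => [->|].
Qed.

Lemma count_piSigma a x : count_mem a (piSigma x) = count negb (dots a x).
Proof.
rewrite /piSigma /dots count_map count_filter count_map count_filter.
by apply: eq_count => l /=; rewrite andbC.
Qed.

Lemma dots_switch a x : dots a (switch x) = map negb (dots a x).
Proof. by rewrite /dots /proj /switch filter_map -!map_comp. Qed.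

Lemma dots_undot a (w : seq 'I_k) : dots a (map (@undot k) w) = nseq (count_mem a w) false.
Proof.
have -> : count_mem a w = size (dots a (map (@undot k) w)).
  by rewrite size_map size_filter count_map.
apply/all_pred1P; apply/allP => d /mapP[l].
by rewrite mem_filter => /andP[_ /mapP[i _ ->]] ->.
Qed.

Lemma append1_drop_cut x a :
  all (fun l => l.1 != a) (drop (size x - find (fun l => l.1 == a) (rev x)) x).
Proof.
rewrite -(revK (drop _ _)) -take_rev all_rev.
elim: (rev x) => //= l s IH; case: ifP => //= /negbT ->.
exact: IH.
Qed.

Lemma append1_proj x z b n a :
  append1 x b n z -> proj a z = proj a x ++ nseq ((b == a) * n) (undot a).
Proof.
rewrite /append1 => -[t [sh ->]].
have noa := append1_drop_cut x b; rewrite -[in proj a x](cat_take_drop (size x -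
  find (fun l : xletter k => l.1 == b) (rev x)) x) /proj !filter_cat -catA; congr (_ ++ _).
move: (drop _ x) noa sh => v noa /(filter_shuffle (fun l : xletter k => l.1 == a)).
rewrite -/(proj a v) -/(proj a t) -/(proj a _) proj_nseq.
have [<-|_] := eqVneq b a; last by rewrite mul0n cats0 => /shuffles0.
have -> : proj b v = [::] by apply/eqP; rewrite -[_ == _]negbK -has_filter -all_predC.
by move=> /shuffle0s.
Qed.

Lemma append_seq_proj f s y z a :
  append_seq f s y z -> proj a z = proj a y ++ nseq (count_mem a s * f a) (undot a).
Proof.
elim: s y => [|b s IH] y /=; first by move=> ->; rewrite cats0.
move=> [x' [xx' /IH ->]]; rewrite (append1_proj a xx') -catA -nseqD mulnDl.
by case: eqP => [->|]; rewrite ?mul0n.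
Qed.

Lemma append1_cat x v t a n : all (fun l => l.1 != a) v ->
  shuffle v (nseq n (undot a)) t -> append1 (x ++ v) a n (x ++ t).
Proof.
move=> noa sh; rewrite /append1.
have -> : find (fun l : xletter k => l.1 == a) (rev (x ++ v)) =
          size v + find (fun l : xletter k => l.1 == a) (rev x).
  by rewrite rev_cat find_cat has_rev -[has _ _]negbK -all_predC noa size_rev.
rewrite size_cat addnC subnDl; set cut := size x - _.
have cutx : cut <= size x by apply: leq_subr.
have -> : drop cut (x ++ v) = drop cut x ++ v.
  rewrite drop_cat; case: ltnP => // xcut.
  have -> : cut = size x by lia.
  by rewrite subnn drop0 drop_size.
exists (drop cut x ++ t); split; first exact: shuffle_catl.
by rewrite takel_cat // catA cat_take_drop.
Qed.

Lemma star_Rlang_letters m r a u : star (Rlang m r a) u -> all (fun l => l.1 == a) u.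
Proof.
move=> /star_eq1[n ->]; elim: n => //= n IH.
by rewrite all_cat IH andbT /Rword /= eqxx all_cat /= !all_nseq /= eqxx !orbT.
Qed.

Lemma foldr_shuffle_starP m r (s : seq 'I_k) y : uniq s ->
  foldr (fun a acc => shuffleL (star (Rlang m r a)) acc) (fun w => w = [::]) s y <->
  all (fun l => l.1 \in s) y /\ forall a, a \in s -> star (Rlang m r a) (proj a y).
Proof.
elim: s y => [|b s IH] y /=.
  by move=> _; split=> [->|[]] //; case: y.
move=> /andP[bs us]; split.
- move=> [u [v [Su [/(IH _ us)[allv starv] sh]]]].
  have allu := star_Rlang_letters Su.
  split=> [|a].
    rewrite (all_shuffle _ sh); apply/andP; split.
      by apply: sub_all allu => l /eqP ->; rewrite mem_head.
    by apply: sub_all allv => l sl; rewrite inE sl orbT.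
  move: (filter_shuffle (fun l : xletter k => l.1 == a) sh).
  rewrite -!/(proj a _) inE; have [-> + _|ab + /= sa] := eqVneq a b.
    have -> : proj b v = [::].
      apply/eqP; rewrite -[_ == _]negbK -has_filter -all_predC.
      by apply: sub_all allv => l /= ls; apply: contraNneq bs => <-.
    by move=> /shuffles0 ->; rewrite /proj (all_filterP allu).
  have -> : proj a u = [::].
    apply/eqP; rewrite -[_ == _]negbK -has_filter -all_predC.
    by apply: sub_all allu => -[c d] /= /eqP ->; rewrite eq_sym.
  by move=> /shuffle0s ->; apply: starv.
- move=> [ally starl]; exists (proj b y), [seq l <- y | l.1 != b].
  split; first by apply: starl; rewrite mem_head.
  split; last exact: (shuffle_filter (fun l : xletter k => l.1 == b)).
  apply/(IH _ us); split=> [|a sa].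
    rewrite all_filter; apply: sub_all ally => l /=.
    by rewrite inE; case: eqVneq.
  have ab : a != b by apply: contraNneq bs => <-.
  rewrite /proj -filter_predI (eq_filter (a2 := fun l : xletter k => l.1 == a)).
    by apply: starl; rewrite inE sa orbT.
  by move=> l /=; case: eqVneq => // ->; rewrite (negbTE ab).
Qed.

Lemma YsetP m r y : Yset m r y <-> forall a, star (Rlang m r a) (proj a y).
Proof.
rewrite /Yset (foldr_shuffle_starP _ _ _ (enum_uniq _)).
split=> [[_ H] a | H]; first by apply: H; rewrite mem_enum.
by split=> [|a _]; [apply/allP => l _; rewrite mem_enum | apply: H].
Qed.

Lemma lmatchC (l1 l2 : xletter k) : lmatch l1 l2 = lmatch l2 l1.
Proof.
case: l1 l2 => a1 d1 [a2 d2]; rewrite /lmatch /= eq_sym.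
by case: eqVneq => // ->; case: d1; case: d2.
Qed.

Lemma wmatchC x y : wmatch x y = wmatch y x.
Proof. by elim: x y => [|l x IH] [|l' y] //=; rewrite lmatchC IH. Qed.

Lemma lmatch_spec (l1 l2 l : xletter k) : lmatch l1 l2 = Some l ->
  [/\ l1.1 = l2.1, l1.2 || l2.2 & l = (l1.1, l1.2 && l2.2)].
Proof.
case: l1 l2 => a d [a' d']; rewrite /lmatch /=.
by case: eqP => // <-; case: d; case: d' => //= -[<-].
Qed.

(* A successful match pairs the letters of [x] and [y] position by position; [s] records the
   letter of [x] together with the dot of [y]. *)
Lemma wmatch_spec x y z : wmatch x y = Some z ->
  exists s : seq (xletter k * bool),
    [/\ x = map fst s, y = [seq (e.1.1, e.2) | e <- s],
        z = [seq (e.1.1, e.1.2 && e.2) | e <- s] & all (fun e => e.1.2 || e.2) s].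
Proof.
elim: x y z => [|l x IH] [|l' y] z //=; first by move=> [<-]; exists [::].
case E1: (lmatch l l') => [l''|] //; case E2: (wmatch x y) => [z'|] // [<-].
have [s [-> -> -> al]] := IH _ _ E2; have [ll' dd' ->] := lmatch_spec E1.
exists ((l, l'.2) :: s); split=> //=; last by rewrite dd'.
by rewrite ll'; case: l' {ll' dd' E1}.
Qed.

Lemma wmatch_dots x y z a : wmatch x y = Some z ->
  exists s : seq (bool * bool),
    [/\ dots a x = unzip1 s, dots a y = unzip2 s,
        dots a z = [seq e.1 && e.2 | e <- s] & all (fun e => e.1 || e.2) s].
Proof.
move=> /wmatch_spec[s [-> -> -> al]].
exists [seq (e.1.2, e.2) | e <- s & e.1.1 == a].
split; try by rewrite /dots /proj /unzip1 /unzip2 !filter_map -!map_comp.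
by rewrite all_map all_filter; apply: sub_all al => e /= ->; rewrite implybT.
Qed.

Definition last_dotted x := if x is l :: x' then (last l x').2 else false.

Lemma wmatch_last_dotted x y z : wmatch x y = Some z ->
  last_dotted x -> last_dotted y -> last_dotted z.
Proof.
move=> /wmatch_spec[[|e s] [-> -> -> _]] //=.
by rewrite !last_map /= => -> ->.
Qed.

End Words.

Section Blocks.
Variables m r : nat.

(* Holes are the positions of the dotted letters in the periodic pattern of [Rword m r]. *)
Definition hole o := (o %% m == 0) || (o %% m == r).

Definition hole_pattern := [seq hole i | i <- iota 0 m].

Definition block_dot lo hi o := hole o && (lo <= o %/ m) && (o %/ m < hi).

Lemma hole_patternE : 0 < r < m ->
  hole_pattern = true :: nseq (r - 1) false ++ true :: nseq (m - r - 1) false.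
Proof.
move=> /andP[r0 rm]; have E : m = 1 + ((r - 1) + (1 + (m - r - 1))) by lia.
rewrite /hole_pattern [in iota 0 m]E !iotaD !map_cat /= !add0n /hole mod0n /=.
have -> : 1 + (r - 1) = r by lia.
rewrite modn_small // eqxx orbT !(@map_nseq_in _ _ _ false) ?size_iota //.
all: move=> i; rewrite mem_iota => /andP[i1 i2]; rewrite modn_small; last lia.
all: by apply/negbTE; rewrite negb_or; apply/andP; split; apply/eqP; lia.
Qed.

Lemma Rword_holes k (a : 'I_k) : 0 < r < m -> Rword m r a = [seq (a, d) | d <- hole_pattern].
Proof. by move=> rm; rewrite hole_patternE //= map_cat /= !map_nseq. Qed.

Lemma size_hole_pattern : size hole_pattern = m.
Proof. by rewrite size_map size_iota. Qed.

Lemma count_hole_pattern : 0 < r < m -> count id hole_pattern = 2.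
Proof. by move=> rm; rewrite hole_patternE //= count_cat /= !count_nseq. Qed.

Lemma count_negb_hole_pattern : 0 < r < m -> count negb hole_pattern = m - 2.
Proof.
move=> rm; have := count_predC id hole_pattern.
by rewrite count_hole_pattern // size_hole_pattern => E; rewrite -[in RHS]E addKn.
Qed.

Lemma map_hole_iota_blocks d b : 0 < m ->
  [seq hole o | o <- iota (m * b) (m * d)] = flatten (nseq d hole_pattern).
Proof.
move=> m0; elim: d b => [|d IH] b; first by rewrite muln0.
rewrite mulnS iotaD map_cat /= -(IH b.+1) mulnS addnC; congr (_ ++ _).
rewrite -[m * b]addn0 iotaDl -map_comp; apply/eq_in_map => i.
by rewrite mem_iota /= /hole add0n => im; rewrite mulnC modnMDl modn_small.
Qed.

Lemma block_dot_iota lo hi N : 0 < m -> lo <= hi -> m * hi <= N ->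
  [seq block_dot lo hi o | o <- iota 0 N] =
  nseq (m * lo) false ++ flatten (nseq (hi - lo) hole_pattern) ++ nseq (N - m * hi) false.
Proof.
move=> m0 lohi hiN; have mlohi : m * lo <= m * hi by rewrite leq_mul2l lohi orbT.
have E : N = m * lo + (m * (hi - lo) + (N - m * hi)) by rewrite mulnBr; lia.
rewrite [in iota 0 N]E !iotaD !map_cat add0n -(map_hole_iota_blocks _ lo) //.
congr (_ ++ _ ++ _);
  [rewrite (@map_nseq_in _ _ _ false) ?size_iota // | apply/eq_in_map |
   rewrite (@map_nseq_in _ _ _ false) ?size_iota //].
all: move=> o; rewrite mem_iota /block_dot leq_divRL // ltn_divLR // => /andP[o1 o2].
- have -> : (lo * m <= o) = false by apply/negbTE; rewrite -ltnNge; lia.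
  by rewrite andbF.
- have -> : lo * m <= o by lia.
  have -> : o < hi * m by rewrite mulnBr in o2; lia.
  by rewrite !andbT.
- have -> : (o < hi * m) = false.
    by apply/negbTE; rewrite -leqNgt; rewrite mulnBr in o1; lia.
  by rewrite andbF.
Qed.

Lemma block_dot_orN lo hi nb o : hi <= nb -> block_dot lo nb o || ~~ block_dot lo hi o.
Proof. by rewrite /block_dot; case: (hole o) => //=; case: (lo <= o %/ m) => //=; lia. Qed.

Lemma block_dot_andN lo hi nb o : lo <= hi <= nb ->
  block_dot lo nb o && ~~ block_dot lo hi o = block_dot hi nb o.
Proof.
rewrite /block_dot; case: (hole o) => //= /andP[lohi hinb].
by case: (leqP lo (o %/ m)); case: (ltnP (o %/ m) hi); case: (ltnP (o %/ m) nb) => //=; lia.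
Qed.

End Blocks.

(** * Soundness *)

Section Soundness.
Variables (k q : nat) (c : 'I_k -> nat) (p : 'I_q -> 'I_k -> nat) (m r : nat).
Implicit Types (x y z : xword k) (a : 'I_k).

Definition period_comb (v : 'I_k -> nat) :=
  exists n : 'I_q -> nat, forall a, v a = \sum_(j < q) n j * p j a.

Lemma period_combD v1 v2 :
  period_comb v1 -> period_comb v2 -> period_comb (fun a => v1 a + v2 a).
Proof.
move=> [n1 E1] [n2 E2]; exists (fun j => n1 j + n2 j) => a.
by rewrite E1 E2 -big_split; apply: eq_bigr => j _; rewrite mulnDl.
Qed.

Definition fill_like x := last_dotted x /\ period_comb (fun a => count negb (dots a x)).

(* The dotted [a]'s sit in holes of the first [nb a] blocks of length [m]; [t] is the Parikh
   image of the appended word of [W] and [v] the sum of the periods already filled in. *)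
Definition scaffold_like x := exists t nb v, [/\ lin_set c p t, period_comb v & forall a,
  [/\ size (dots a x) = t a + m * nb a,
      count negb (dots a x) + 2 * nb a = size (dots a x) + v a &
      forall o, nth false (dots a x) o -> hole m r o && (o %/ m < nb a)]].

Definition closure_inv x := fill_like x \/ scaffold_like x.

Lemma sum_pred1_mul (j : 'I_q) (f : 'I_q -> nat) : \sum_(j' < q) (j' == j) * f j' = f j.
Proof. by rewrite (bigD1 j) //= eqxx mul1n big1 ?addn0 // => j' /negbTE ->. Qed.

Lemma sc_last_undotted y l y' : r.+1 < m -> sc m r y -> y = l :: y' -> ~~ (last l y').2.
Proof.
move=> rm scy Ey; set l0 := last l y'; set a := l0.1.
have Ea : proj a y = rcons (proj a (belast l y')) l0 by rewrite Ey lastI /proj filter_rcons eqxx.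
rewrite -(last_rcons l0 (proj a (belast l y')) l0) -Ea.
apply: (@star_last _ _ (fun l : xletter k => ~~ l.2) _ _ _ (scy a)); last first.
  by rewrite Ea; case: (proj a _).
move=> u [->|->] //; split=> //; rewrite /Rword /= last_cat /=.
have : 0 < m - r - 1 by lia.
by case: (m - r - 1) => // n _; elim: n.
Qed.

Lemma Xset_fill_like x : r.+1 < m -> Xset m r p x -> fill_like x.
Proof.
move=> rm [[[y [scy ->]] notdot] [j pj]]; split; last first.
  by exists (fun j' => (j' == j) : nat) => a; rewrite sum_pred1_mul -pj /parikh count_piSigma.
case Ey: y notdot => [|l y'] //= _; rewrite last_map.
exact: sc_last_undotted scy Ey.
Qed.

Lemma Yset_dots y a : 0 < r < m -> Yset m r y ->
  dots a y = flatten (nseq (size (dots a y) %/ m) (hole_pattern m r)).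
Proof.
move=> rm /YsetP /(_ a) /star_eq1[n Pn].
have -> : dots a y = flatten (nseq n (hole_pattern m r)).
  by rewrite /dots Pn Rword_holes // map_flatten map_nseq -map_comp map_id.
by rewrite size_flatten_nseq size_hole_pattern mulnK //; case/andP: rm; lia.
Qed.

Lemma YW_scaffold_like z : 0 < r -> r.+1 < m ->
  appendL (Yset m r) (Wset m c p) z -> scaffold_like z.
Proof.
move=> r0 rSm [y [wW [Yy [[h [_ Eh]] Ap]]]]; have m0 : 0 < m by lia.
have rm : 0 < r < m by lia.
pose nb a := size (dots a y) %/ m.
have Dz a : dots a z = flatten (nseq (nb a) (hole_pattern m r)) ++ nseq (parikh wW a) false.
  rewrite /dots (append_seq_proj a Ap) map_cat -/(dots a y) -Yset_dots //.
  by rewrite count_uniq_mem ?enum_uniq // mem_enum mul1n map_nseq.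
exists (parikh wW), nb, (fun _ => 0); split.
- by exists h => a; apply: Eh.
- by exists (fun _ => 0) => a; rewrite big1 // => j _; rewrite mul0n.
move=> a; rewrite Dz size_cat size_flatten_nseq size_hole_pattern size_nseq; split.
- by rewrite addnC mulnC.
- rewrite count_cat count_flatten_nseq count_negb_hole_pattern // count_nseq /= mul1n.
  have : nb a * 2 <= nb a * m by rewrite leq_mul2l; apply/orP; right; lia.
  by rewrite mulnBr; lia.
- have -> : flatten (nseq (nb a) (hole_pattern m r)) ++ nseq (parikh wW a) false =
            [seq block_dot m r 0 (nb a) o | o <- iota 0 (nb a * m + parikh wW a)].
    rewrite block_dot_iota //; last by rewrite mulnC leq_addr.
    by rewrite muln0 subn0 (mulnC (nb a)) addKn.
  move=> o; case: (ltnP o (nb a * m + parikh wW a)) => oN.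
    by rewrite (nth_map 0) ?size_iota // nth_iota // add0n => /andP[/andP[-> _] ->].
  by rewrite nth_default ?size_map ?size_iota.
Qed.

Lemma wmatch_size_dots x y z a : wmatch x y = Some z -> size (dots a z) = size (dots a x).
Proof. by move=> /(wmatch_dots a)[s [-> _ -> _]]; rewrite !size_map. Qed.

Lemma wmatch_count_negb x y z a : wmatch x y = Some z ->
  count negb (dots a z) = count negb (dots a x) + count negb (dots a y).
Proof. by move=> /(wmatch_dots a)[s [-> -> -> /count_negb_andb]]. Qed.

Lemma wmatch_nth_dots x y z a o : wmatch x y = Some z ->
  nth false (dots a z) o -> nth false (dots a x) o.
Proof. by move=> /(wmatch_dots a)[s [-> _ -> _]]; rewrite nth_andb => /andP[]. Qed.

Lemma scaffold_match_fill x y z : scaffold_like x ->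
  period_comb (fun a => count negb (dots a y)) -> wmatch x y = Some z -> scaffold_like z.
Proof.
move=> [t [nb [v [lt pv Hx]]]] py xyz.
exists t, nb, (fun a => v a + count negb (dots a y)); split=> //; first exact: period_combD.
move=> a; have [sx cx hx] := Hx a.
rewrite (wmatch_size_dots a xyz) (wmatch_count_negb a xyz); split=> // [|o].
  by rewrite addnA -cx; lia.
by move/(wmatch_nth_dots xyz)/hx.
Qed.

(* For [N < m] position [0] lies in no block; otherwise [1] or [2] is a non-hole of the first
   block. *)
Definition free_pos N := if N < m then 0 else if r == 1 then 2 else 1.

Lemma free_pos_lt N : 4 <= m -> 0 < N -> free_pos N < N.
Proof. by move=> m4 N0; rewrite /free_pos; case: (ltnP N m) => // mN; case: (r == 1); lia. Qed.

Lemma scaffold_free_pos x a : 4 <= m -> 0 < r < m ->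
  scaffold_like x -> ~~ nth false (dots a x) (free_pos (size (dots a x))).
Proof.
move=> m4 rm [t [nb [v [_ _ /(_ a)[-> _ hx]]]]]; apply/negP => /hx /andP[].
rewrite /free_pos; case: (ltnP (t a + m * nb a) m) => [Nm _|_].
  rewrite div0n => nb0; have : m <= m * nb a by rewrite leq_pmulr.
  lia.
by rewrite /hole modn_small; case: (r =P 1) => r1 /=; lia.
Qed.

Lemma scaffold_match_scaffold x y z : 4 <= m -> 0 < r < m ->
  scaffold_like x -> scaffold_like y -> wmatch x y = Some z -> z = x.
Proof.
move=> m4 rm Sx Sy; case: x Sx => [|l x'] Sx; first by case: y Sy => //= _ [<-].
set a := l.1; set N := size (dots a (l :: x')).
move=> /(wmatch_dots a)[s [Ex Ey _ al]]; exfalso.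
have sN : size s = N by rewrite /N Ex size_map.
have N0 : 0 < N by rewrite /N /dots /= eqxx.
have := nth_orb al (_ : free_pos N < size s); rewrite sN free_pos_lt // => /(_ isT).
rewrite -Ex -Ey (negbTE (scaffold_free_pos a m4 rm Sx)).
have -> : N = size (dots a y) by rewrite Ey size_map.
by rewrite (negbTE (scaffold_free_pos a m4 rm Sy)).
Qed.

Lemma closure_inv_match x y z : 4 <= m -> 0 < r < m ->
  closure_inv x -> closure_inv y -> wmatch x y = Some z -> closure_inv z.
Proof.
move=> m4 rm [Fx|Sx] [Fy|Sy] xyz.
- left; split; first exact: wmatch_last_dotted xyz Fx.1 Fy.1.
  have [n E] := period_combD Fx.2 Fy.2.
  by exists n => a; rewrite (wmatch_count_negb a xyz); apply: E.
- by right; rewrite wmatchC in xyz; apply: scaffold_match_fill Sy Fx.2 xyz.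
- by right; apply: scaffold_match_fill Sx Fy.2 xyz.
- by right; rewrite (scaffold_match_scaffold m4 rm Sx Sy xyz).
Qed.

Lemma mclosure_inv x : 4 <= m -> 0 < r -> r.+1 < m ->
  mclosure (Dset m r c p) x -> closure_inv x.
Proof.
move=> m4 r0 rm; elim=> [{}x [Xx|YWx]|u v w _ Iu _ Iv uvw].
- by left; apply: Xset_fill_like.
- by right; apply: YW_scaffold_like.
- by apply: closure_inv_match Iu Iv uvw => //; lia.
Qed.

Lemma closure_inv_undot (w : seq 'I_k) : ~~ odd m ->
  closure_inv (map (@undot k) w) -> lin_set c p (parikh w).
Proof.
move=> em [[+ _]|[t [nb [v [[n1 Et] [n2 Ev] H]]]]]; first by case: w => //= b w; rewrite last_map.
exists (fun j => n1 j + m %/ 2 * n2 j) => a.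
have [] := H a; rewrite dots_undot size_nseq count_nseq /= mul1n => sz nbv2 _.
have nbv : m * nb a = m %/ 2 * v a.
  by rewrite -{1}(divnK (_ : 2 %| m)) ?dvdn2 // -mulnA; congr (_ * _); lia.
rewrite /parikh sz Et nbv Ev -addnA big_distrr -big_split; congr (_ + _); apply: eq_bigr => j _.
by rewrite mulnDl -mulnA.
Qed.

Lemma closure_sub_linear (L : seq 'I_k -> Prop) w :
  comm_lang L -> linear_property L c p -> ~~ odd m -> 4 <= m -> 0 < r -> r.+1 < m ->
  Cl (Dset m r c p) w -> L w.
Proof.
move=> cl lp em m4 r0 rSm /(mclosure_inv m4 r0 rSm) /(closure_inv_undot em).
by move=> /(lp _).2 [w' [Lw' pw']]; apply: (cl w' w pw').1.
Qed.

End Soundness.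

(** * Completeness *)

Section Dotting.
Variable k : nat.
Implicit Types (w : seq 'I_k) (a b : 'I_k) (K P : 'I_k -> nat -> bool).

(* [occ w] tags each letter of [w] with the number of earlier occurrences of the same letter. *)
Fixpoint occ_from (cnt : 'I_k -> nat) w : seq ('I_k * nat) :=
  if w is a :: w' then (a, cnt a) :: occ_from (fun b => cnt b + (b == a)) w' else [::].

Definition occ w := occ_from (fun=> 0) w.

Lemma occ_from_ext cnt1 cnt2 w : cnt1 =1 cnt2 -> occ_from cnt1 w = occ_from cnt2 w.
Proof.
elim: w cnt1 cnt2 => //= a w IH cnt1 cnt2 E.
by rewrite E (IH _ (fun b => cnt2 b + (b == a))) // => b; rewrite E.
Qed.

Lemma occ_from_cat cnt w1 w2 : occ_from cnt (w1 ++ w2) =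
  occ_from cnt w1 ++ occ_from (fun b => cnt b + count_mem b w1) w2.
Proof.
elim: w1 cnt => [|a w1 IH] cnt /=; first by apply: occ_from_ext => b; rewrite addn0.
by rewrite IH; congr (_ :: _ ++ _); apply: occ_from_ext => b; rewrite -addnA eq_sym.
Qed.

Lemma map_fst_occ_from cnt w : map fst (occ_from cnt w) = w.
Proof. by elim: w cnt => //= a w IH cnt; rewrite IH. Qed.

Lemma occ_from_letter cnt w a :
  [seq e <- occ_from cnt w | e.1 == a] = [seq (a, o) | o <- iota (cnt a) (count_mem a w)].
Proof.
elim: w cnt => //= b w IH cnt; rewrite IH.
by case: eqVneq => [->|_]; rewrite ?addn1 ?addn0.
Qed.

Lemma mem_occ_from cnt w e :
  e \in occ_from cnt w -> cnt e.1 <= e.2 < cnt e.1 + count_mem e.1 w.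
Proof.
case: e => a o ao; have : (a, o) \in [seq e <- occ_from cnt w | e.1 == a].
  by rewrite mem_filter eqxx.
by rewrite occ_from_letter => /mapP[o' oi [eo]]; rewrite /= eo -mem_iota.
Qed.

Lemma split_count w b M : M <= count_mem b w ->
  exists w1 w2, w = w1 ++ w2 /\ count_mem b w1 = M.
Proof.
elim: w M => [|a w IH] M; first by rewrite leqn0 => /eqP ->; exists [::], [::].
case: M => [_|M]; first by exists [::], (a :: w).
rewrite /= eq_sym; case: eqP => [<-|ab] le.
  by have [w1 [w2 [-> <-]]] := IH M le; exists (b :: w1), w2; rewrite /= eqxx.
have [w1 [w2 [-> c1]]] := IH M.+1 le; exists (a :: w1), w2.
by rewrite /= c1 eq_sym; case: eqP.
Qed.

(* The [o]-th occurrence of [a] in [w] is kept iff [K a o] and dotted iff [P a o]. *)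
Definition dotting w K P : xword k := [seq (e.1, P e.1 e.2) | e <- occ w & K e.1 e.2].

Lemma dotting_ext w K1 K2 P1 P2 : K1 =2 K2 -> P1 =2 P2 -> dotting w K1 P1 = dotting w K2 P2.
Proof.
move=> EK EP; rewrite /dotting (eq_filter (a2 := fun e => K2 e.1 e.2)) => [|e]; last exact: EK.
by apply: eq_map => e; rewrite EP.
Qed.

Lemma dots_dotting w K P a :
  dots a (dotting w K P) = [seq P a o | o <- iota 0 (count_mem a w) & K a o].
Proof.
rewrite /dots /proj /dotting filter_map -filter_predI.
rewrite (eq_filter (a2 := predI (fun e => K e.1 e.2) (fun e => e.1 == a))); last first.
  by move=> e /=; rewrite andbC.
by rewrite filter_predI occ_from_letter filter_map -!map_comp.
Qed.

Lemma dotting_undot w : dotting w (fun _ _ => true) (fun _ _ => false) = map (@undot k) w.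
Proof.
rewrite /dotting (eq_filter (a2 := predT)) // filter_predT.
by rewrite -{2}(map_fst_occ_from (fun=> 0) w) -map_comp.
Qed.

Lemma wmatch_dotting w K P1 P2 : (forall a o, P1 a o || P2 a o) ->
  wmatch (dotting w K P1) (dotting w K P2) = Some (dotting w K (fun a o => P1 a o && P2 a o)).
Proof.
move=> P12; rewrite /dotting; elim: (filter _ _) => //= e s ->.
by rewrite /lmatch /= eqxx; case: (P1 _ _) (P12 e.1 e.2); case: (P2 _ _).
Qed.

Lemma append1_dotting w P (bound : 'I_k -> nat) (A : seq 'I_k) b :
  (forall a o, bound a <= o -> P a o = false) -> b \notin A -> bound b <= count_mem b w ->
  append1 (dotting w (fun a o => (a \in A) || (o < bound a)) P) b (count_mem b w - bound b)
          (dotting w (fun a o => (a \in b :: A) || (o < bound a)) P).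
Proof.
move=> Pout bA bw; have [w1 [w2 [-> c1]]] := split_count bw.
pose g (e : 'I_k * nat) := (e.1, P e.1 e.2).
pose K (e : 'I_k * nat) := (e.1 \in A) || (e.2 < bound e.1).
pose K' (e : 'I_k * nat) := (e.1 \in b :: A) || (e.2 < bound e.1).
rewrite /dotting /occ occ_from_cat !filter_cat !map_cat -/g -/K -/K'.
set O2 := occ_from _ w2.
have -> : filter K' (occ_from (fun=> 0) w1) = filter K (occ_from (fun=> 0) w1).
  apply: eq_in_filter => -[a o] /mem_occ_from /= oa; rewrite /K /K' inE /=.
  by case: eqVneq => [ab|] //=; rewrite add0n in oa; rewrite ab -c1 -ab oa orbT.
have O2b e : e \in O2 -> e.1 = b -> bound b <= e.2.
  by move=> /mem_occ_from + eb; rewrite eb /= c1 => /andP[].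
apply: append1_cat.
  rewrite all_map all_filter; apply/allP => e eO2; apply/implyP; apply: contraL => /eqP /= eb.
  by rewrite /K eb (negbTE bA) -leqNgt O2b.
have := map_shuffle g (shuffle_filter (fun e : 'I_k * nat => e.1 != b) (filter K' O2)).
rewrite -!filter_predI (@eq_in_filter _ _ K) => [|e eO2]; last first.
  rewrite /= /K /K' inE; case: eqVneq => [eb|] //=.
  by rewrite eb (negbTE bA) ltnNge O2b.
rewrite (@eq_in_filter _ (predI (predC (fun e => e.1 != b)) K') (fun e => e.1 == b))
  => [|e eO2]; last first.
  by rewrite /= /K' inE negbK; case: eqVneq.
rewrite occ_from_letter -map_comp [X in shuffle _ X _](@map_nseq_in _ _ _ (undot b)) => [|o].
  by rewrite size_iota count_cat c1 addKn.
by rewrite mem_iota add0n c1 => /andP[/Pout oP _]; rewrite /g /= oP.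
Qed.

Lemma append_seq_dotting w P (bound f : 'I_k -> nat) (s A : seq 'I_k) :
  (forall a o, bound a <= o -> P a o = false) -> (forall a, bound a <= count_mem a w) ->
  (forall a, f a = count_mem a w - bound a) -> uniq s -> {in s, forall a, a \notin A} ->
  append_seq f s (dotting w (fun a o => (a \in A) || (o < bound a)) P)
                 (dotting w (fun a o => (a \in s ++ A) || (o < bound a)) P).
Proof.
move=> Pout bw fE; elim: s A => [|b s IH] A //= /andP[bs us] sA.
exists (dotting w (fun a o => (a \in b :: A) || (o < bound a)) P); split.
  by rewrite fE; apply: append1_dotting => //; apply: sA; rewrite mem_head.
have -> : dotting w (fun a o => (a \in b :: s ++ A) || (o < bound a)) P =
          dotting w (fun a o => (a \in s ++ b :: A) || (o < bound a)) P.
  by apply: dotting_ext => // a o; rewrite !(mem_cat, inE) orbCA.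
apply: IH => // a sa; rewrite inE negb_or sA ?inE ?sa ?orbT // andbT.
by apply: contraNneq bs => <-.
Qed.

End Dotting.

Section Completeness.
Variables (k q : nat) (c : 'I_k -> nat) (p : 'I_q -> 'I_k -> nat) (m r : nat).
Implicit Types (w : seq 'I_k) (lo hi nb : 'I_k -> nat).

Definition block_dotting w lo hi :=
  dotting w (fun _ _ => true) (fun a => block_dot m r (lo a) (hi a)).

Lemma dots_block_dotting w lo hi a : 0 < m -> lo a <= hi a -> m * hi a <= count_mem a w ->
  dots a (block_dotting w lo hi) = nseq (m * lo a) false ++
    flatten (nseq (hi a - lo a) (hole_pattern m r)) ++ nseq (count_mem a w - m * hi a) false.
Proof.
by move=> *; rewrite dots_dotting (eq_filter (a2 := predT)) // filter_predT block_dot_iota.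
Qed.

Lemma Yset_start w nb : 0 < r < m -> (forall a, m * nb a <= count_mem a w) ->
  Yset m r (dotting w (fun a o => (a \in [::]) || (o < m * nb a))
                      (fun a => block_dot m r 0 (nb a))).
Proof.
move=> rm nbw; have m0 : 0 < m by case/andP: rm; lia.
apply/YsetP => a; rewrite proj_dots dots_dotting filter_iota_ltn // block_dot_iota //.
rewrite muln0 subn0 subnn /= cats0 map_flatten map_nseq -Rword_holes //.
exact: star_flatten_nseq.
Qed.

Lemma YW_block_dotting w nb wW : 0 < r < m -> (forall a, m * nb a <= count_mem a w) ->
  Wset m c p wW -> (forall a, parikh wW a = count_mem a w - m * nb a) ->
  appendL (Yset m r) (Wset m c p) (block_dotting w (fun=> 0) nb).
Proof.
move=> rm nbw WwW pwW.
exists (dotting w (fun a o => (a \in [::]) || (o < m * nb a)) (fun a => block_dot m r 0 (nb a))).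
exists wW; split; first exact: Yset_start.
split=> //; have -> : block_dotting w (fun=> 0) nb =
  dotting w (fun a o => (a \in enum 'I_k ++ [::]) || (o < m * nb a))
            (fun a => block_dot m r 0 (nb a)).
  by apply: dotting_ext => // a o; rewrite cats0 mem_enum.
apply: append_seq_dotting => //; last exact: enum_uniq.
have m0 : 0 < m by case/andP: rm; lia.
by move=> a o; rewrite /block_dot leqNgt mulnC -ltn_divLR // => /negbTE ->; rewrite andbF.
Qed.

(* Matching with the fill word [switch (block_dotting w lo hi)] undots the blocks [lo a]
   to [hi a - 1] of every letter [a]. *)
Lemma fill_step w lo hi nb (j : 'I_q) : 0 < r -> r.+1 < m ->
  (forall a, lo a <= hi a <= nb a) -> (forall a, m * nb a <= count_mem a w) ->
  (forall a, (hi a - lo a).*2 = p j a) ->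
  mclosure (Dset m r c p) (block_dotting w lo nb) ->
  mclosure (Dset m r c p) (block_dotting w hi nb).
Proof.
move=> r0 rSm lhn nbw dp Mlo; have rm : 0 < r < m by lia.
have m0 : 0 < m by lia.
case: (boolP [forall a, p j a == 0]) => [/forallP p0 | /forallPn[a0 pa0]].
  suff -> : block_dotting w hi nb = block_dotting w lo nb by [].
  apply: dotting_ext => // a o; suff -> : hi a = lo a by [].
  by have /eqP := p0 a; rewrite -dp; case/andP: (lhn a); lia.
pose y := block_dotting w lo hi.
have hiw a : m * hi a <= count_mem a w.
  by apply: leq_trans (nbw a); rewrite leq_mul2l; case/andP: (lhn a) => _ ->; rewrite orbT.
have lohi a : lo a <= hi a by case/andP: (lhn a).
have piF a : parikh (piSigma (switch y)) a = p j a.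
  rewrite /parikh count_piSigma dots_switch count_map (eq_count (a2 := id)) => [|d]; last first.
    by rewrite /= negbK.
  rewrite /y (dots_block_dotting m0 (lohi a) (hiw a)) !count_cat count_flatten_nseq.
  by rewrite count_hole_pattern // !count_nseq /= !mul0n add0n addn0 -dp muln2.
have DF : Dset m r c p (switch y).
  left; split; last by exists j.
  split.
    exists y; split=> // a; rewrite proj_dots (dots_block_dotting m0 (lohi a) (hiw a)).
    rewrite !map_cat !map_nseq map_flatten map_nseq -Rword_holes //.
    by apply: star_cat; [|apply: star_cat]; [apply: star_nseq | apply: star_flatten_nseq |
       apply: star_nseq]; [right | left | right].
  apply: contra pa0 => alld; rewrite -piF /piSigma (eq_in_filter (a2 := pred0)).
    by rewrite filter_pred0.
  by move=> l /(allP alld) ->.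
have Esw : switch y = dotting w (fun _ _ => true) (fun a => predC (block_dot m r (lo a) (hi a))).
  by rewrite /switch /y /block_dotting /dotting -map_comp.
apply: (mc_match Mlo (mc_base DF)); rewrite Esw wmatch_dotting => [|a o]; last first.
  by apply: block_dot_orN; case/andP: (lhn a).
by congr Some; apply: dotting_ext => // a o; apply: block_dot_andN.
Qed.

Lemma fill_steps w nb (js : seq 'I_q) lo : 0 < r -> r.+1 < m ->
  (forall j a, ~~ odd (p j a)) -> (forall a, m * nb a <= count_mem a w) ->
  (forall a, lo a + \sum_(j <- js) (p j a %/ 2) = nb a) ->
  mclosure (Dset m r c p) (block_dotting w lo nb) ->
  mclosure (Dset m r c p) (block_dotting w nb nb).
Proof.
move=> r0 rSm pe nbw; elim: js lo => [|j js IH] lo sum Mlo.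
  suff -> : block_dotting w nb nb = block_dotting w lo nb by [].
  by apply: dotting_ext => // a o; rewrite -sum big_nil addn0.
have sum' a : lo a + p j a %/ 2 + \sum_(j <- js) (p j a %/ 2) = nb a.
  by rewrite -addnA -(sum a) big_cons.
apply: (IH _ sum'); apply: fill_step Mlo => // a.
  by rewrite leq_addr -(sum' a) leq_addr.
by rewrite addKn -muln2 divnK // dvdn2.
Qed.

Lemma sum_period_split (n : 'I_q -> nat) d a : 0 < d -> (forall j, ~~ odd (p j a)) ->
  \sum_(j < q) n j * p j a =
  \sum_(j < q) (n j %% d) * p j a + d.*2 * \sum_(j < q) (n j %/ d) * (p j a %/ 2).
Proof.
move=> d0 pe; rewrite big_distrr -big_split; apply: eq_bigr => j _ /=.
set P := p j a %/ 2; have -> : p j a = P * 2 by rewrite divnK // dvdn2.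
rewrite {1}(divn_eq (n j) d) -muln2; nia.
Qed.

Lemma sum_nseq_enum (l : 'I_q -> nat) (F : 'I_q -> nat) :
  \sum_(j <- flatten [seq nseq (l j) j | j <- enum 'I_q]) F j = \sum_(j < q) l j * F j.
Proof.
rewrite big_flatten /= big_map big_enum /=.
by apply: eq_bigr => j _; rewrite big_nseq iter_addn_0 mulnC.
Qed.

Lemma block_dotting_full w nb : block_dotting w nb nb = map (@undot k) w.
Proof.
rewrite -dotting_undot; apply: dotting_ext => // a o.
by rewrite /block_dot; case: ltnP; rewrite ?andbF.
Qed.

Lemma linear_sub_closure (L : seq 'I_k -> Prop) w :
  linear_property L c p -> (forall j a, ~~ odd (p j a)) ->
  ~~ odd m -> 4 <= m -> 0 < r -> r.+1 < m -> L w -> Cl (Dset m r c p) w.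
Proof.
move=> lp pe em m4 r0 rSm Lw; have rm : 0 < r < m by lia.
have [n En] := (lp (parikh w)).1 (ex_intro _ w (conj Lw (fun _ => erefl))).
pose d := m %/ 2; have d0 : 0 < d by rewrite divn_gt0 //; lia.
have md : d.*2 = m by rewrite -muln2 divnK // dvdn2.
pose nb a := \sum_(j < q) (n j %/ d) * (p j a %/ 2).
pose t a := c a + \sum_(j < q) (n j %% d) * p j a.
have Ew a : count_mem a w = t a + m * nb a.
  by rewrite -[count_mem a w]/(parikh w a) En (sum_period_split _ d0 (pe^~ a)) md addnA.
have [wW [_ pwW]] : exists wW, L wW /\ parikh wW =1 t by apply/lp; exists (fun j => n j %% d).
have nbw a : m * nb a <= count_mem a w by rewrite Ew leq_addl.
have start : Dset m r c p (block_dotting w (fun=> 0) nb).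
  right; apply: (YW_block_dotting (wW := wW)) => //.
    by exists (fun j => n j %% d); split=> [j|a]; [rewrite ltn_pmod | rewrite pwW].
  by move=> a; rewrite pwW Ew addnK.
rewrite /Cl -(block_dotting_full w nb).
pose js := flatten [seq nseq (n j %/ d) j | j <- enum 'I_q].
by apply: (fill_steps (js := js)) (mc_base start) => // a; rewrite sum_nseq_enum.
Qed.

End Completeness.

Theorem theorem5 (k : nat) (L : seq 'I_k -> Prop) (q : nat)
  (c : 'I_k -> nat) (p : 'I_q -> 'I_k -> nat) :
  comm_lang L ->
  linear_property L c p ->
  0 < q ->
  (forall (j : 'I_q) (i : 'I_k), ~~ odd (p j i)) ->
  forall m r : nat,
    ~~ odd m -> 4 <= m ->
    1 <= r -> r <= m %/ 2 - 1 ->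
    forall w : seq 'I_k, L w <-> Cl (Dset m r c p) w.
Proof.
(* The argument never uses [0 < q]. *)
move=> cl lp _ pe m r em m4 r0 rle w; have rSm : r.+1 < m by lia.
by split; [apply: linear_sub_closure | apply: closure_sub_linear].
Qed.
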